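(* There exists a fully-dynamic bin packing algorithm under general movement costs with asymptotic competitive ratio $2$ and additive term $1+\log_2 n$, using constant worst-case recourse, where $n$ is the maximum number of items present at any time and is known to the algorithm in advance.
   Context: Fully-dynamic bin packing: items (size $s_i\in[0,1]$, arbitrary movement cost $c_i\ge0$) are inserted and deleted; at each time $t$ the algorithm maintains a packing of the current items $\mathcal{I}_t$ into unit bins, paying $c_i$ each time it moves item $i$. It has asymptotic competitive ratio $\alpha'$ with additive term $\beta$ if it always uses at most $\alpha'\cdot OPT(\mathcal{I}_t)+\beta$ bins ($OPT$ the optimal number of bins), and worst-case recourse $\gamma$ if at each update it incurs movement cost at most $\gamma\cdot c_t$, $c_t$ being the cost of the item updated. *)

From mathcomp Require Import all_boot all_order all_algebra.
From mathcomp Require Import reals exp.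
Set Implicit Arguments. Unset Strict Implicit. Unset Printing Implicit Defensive.
Import Order.TTheory GRing.Theory Num.Theory.
Local Open Scope ring_scope.

(** The update at position [t]
  (time [t], 0-based) is either [Ins s c] (insert a new item of size [s]
  and movement cost [c]; the item is identified by its insertion time [t])
  or [Del j] (delete the item inserted at time [j]). *)

Inductive update (R : Type) : Type :=
| Ins of R & R
| Del of nat.

Arguments Del {R}.

Section BinPacking.
Variable R : realType.

Definition is_ins (u : update R) : bool :=
  if u is Ins _ _ then true else false.

Definition is_del_of (j : nat) (u : update R) : bool :=
  if u is Del k then k == j else false.

Definition upd (s : seq (update R)) (t : nat) : update R := nth (Del 0) s t.

Definition active (s : seq (update R)) (t : nat) : seq nat :=
  [seq j <- iota 0 t | is_ins (upd s j) && ~~ has (is_del_of j) (take t s)].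

Definition item_size (s : seq (update R)) (j : nat) : R :=
  if upd s j is Ins a _ then a else 0.
Definition item_cost (s : seq (update R)) (j : nat) : R :=
  if upd s j is Ins _ c then c else 0.

Definition update_cost (s : seq (update R)) (t : nat) : R :=
  match upd s t with
  | Ins _ c => c
  | Del j => item_cost s j
  end.

Definition valid_seq (s : seq (update R)) : Prop :=
  forall t, (t < size s)%N ->
    match upd s t with
    | Ins a c => 0 <= a <= 1 /\ 0 <= c
    | Del j => j \in active s t
    end.

Definition max_items (s : seq (update R)) : nat :=
  \max_(t < (size s).+1) size (active s t).

Definition packing := nat -> nat.

Definition feasible (sz : nat -> R) (A : seq nat) (P : packing) : Prop :=
  forall b : nat, \sum_(j <- A | P j == b) sz j <= 1.

Definition bins_used (A : seq nat) (P : packing) : nat :=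
  size (undup [seq P j | j <- A]).

Definition fits (sz : nat -> R) (A : seq nat) (k : nat) : Prop :=
  exists P : packing, feasible sz A P /\ forall j, j \in A -> (P j < k)%N.

Definition is_OPT (sz : nat -> R) (A : seq nat) (k : nat) : Prop :=
  fits sz A k /\ forall k', fits sz A k' -> (k <= k')%N.

Definition move_cost (s : seq (update R)) (t : nat) (P Q : packing) : R :=
  \sum_(j <- active s t | (j \in active s t.+1) && (P j != Q j)) item_cost s j.

End BinPacking.

(** An online algorithm: given the advance knowledge [n] and the prefix of
    updates seen so far, it outputs the current packing.  Being a function
    of the prefix only, it is online by construction. *)
Definition algorithm (R : realType) := nat -> seq (update R) -> packing.

Definition log2 (R : realType) (x : R) : R := ln x / ln 2.

(* Items of size in (2^-(i+1), 2^-i], for i <= L := trunc_log 2 n, form class i;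
   the remaining tiny items form class L+1.  Each class is kept as a list sorted
   by the dyadic rounding 2^floor(log2 c) of the movement costs, and the q-th
   block of 2^i consecutive entries of class i is one bin.  Such a bin holds at
   most 2^i items of size at most 2^-i, and the tiny class, having at most
   n < 2^(L+1) items, needs a single bin.  Class i uses at most N_i/2^i + 1 bins
   (N_0 for i = 0), and every item of class i <= L has size above 2^-(i+1), so
   the bin count is at most 2 * (total size) + L + 1 <= 2 OPT + 1 + log2 n.
   An update moves at most one item per group of equal rounded cost: an insertion
   bumps the first item of each lighter group to the end of that group, and a
   deletion fills the hole with the last item of each following group.  The moved
   items thus have strictly decreasing rounded costs, powers of two not above the
   rounded cost of the updated item, hence summing to at most twice it; as rounding
   loses less than a factor 2, the moved items cost at most 4 times the update. *)

From mathcomp Require Import all_boot all_order all_algebra.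
From mathcomp Require Import reals sequences exp.
From mathcomp Require Import lra zify.
Set Implicit Arguments. Unset Strict Implicit. Unset Printing Implicit Defensive.
Import Order.TTheory GRing.Theory Num.Theory.
Local Open Scope ring_scope.

Section DyadicFloor.
Variable R : realType.
Implicit Types a b c : R.

Definition dyadic_floor c : R :=
  if 0 < c then expR ((Num.floor (log2 c))%:~R * ln 2) else 0.

Lemma ln2_gt0 : 0 < ln (2 : R).
Proof. by apply: ln_gt0; lra. Qed.

Lemma dyadic_floor_ge0 c : 0 <= dyadic_floor c.
Proof. by rewrite /dyadic_floor; case: ifP => // _; apply: expR_ge0. Qed.

Lemma dyadic_floor_le c : 0 <= c -> dyadic_floor c <= c.
Proof.
rewrite /dyadic_floor; case: ifPn => // c_gt0 _.
rewrite -{2}(lnK (x := c)) ?posrE // ler_expR -ler_pdivlMr ?ln2_gt0 //.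
exact: floor_le.
Qed.

Lemma ln_log2 c : ln c = log2 c * ln 2.
Proof. by rewrite /log2 divfK ?gt_eqF ?ln2_gt0. Qed.

Lemma dyadic_floor_ge_half c : 0 <= c -> c <= 2 * dyadic_floor c.
Proof.
rewrite le_eqVlt => /predU1P[<-|c_gt0]; first by rewrite mulr_ge0 ?dyadic_floor_ge0.
rewrite /dyadic_floor c_gt0 -{1}(lnK (x := c)) ?posrE //.
rewrite -{1}(lnK (x := 2)) ?posrE ?ltr0n // -expRD ler_expR ln_log2.
have := floorD1_gt (log2 c); rewrite intrD => lt_floor.
have := ln2_gt0; nra.
Qed.

Lemma dyadic_floor_gap a b :
  dyadic_floor a < dyadic_floor b -> 2 * dyadic_floor a <= dyadic_floor b.
Proof.
rewrite /dyadic_floor; case: ifPn => [a_gt0|_]; last by rewrite mulr0 => /ltW.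
case: ifPn => [b_gt0|_]; last by rewrite ltNge expR_ge0.
rewrite ltr_expR ltr_pM2r ?ln2_gt0 // ltr_int => lt_ab.
rewrite -{1}(lnK (x := 2)) ?posrE ?ltr0n // -expRD ler_expR.
rewrite -[X in X + _]mul1r -mulrDl ler_pM2r ?ln2_gt0 //.
by move: lt_ab; rewrite -lezD1 -(ler_int R) intrD addrC.
Qed.

Lemma sum_halving_path (x : R) xs :
  path (fun a b => 2 * b <= a) x xs -> 0 <= last x xs -> \sum_(y <- xs) y <= x.
Proof.
elim: xs x => [|y xs IH] x /=; first by rewrite big_nil.
by case/andP=> le_yx /IH{}IH /IH; rewrite big_cons; lra.
Qed.

Lemma sum_dyadic_path c cs :
  path >%R (dyadic_floor c) (map dyadic_floor cs) ->
  \sum_(x <- cs) dyadic_floor x <= dyadic_floor c.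
Proof.
rewrite -(big_map _ xpredT id) => gt_cs; apply: sum_halving_path.
  move: gt_cs; rewrite !path_map; apply: sub_path => a b; exact: dyadic_floor_gap.
by rewrite last_map dyadic_floor_ge0.
Qed.

Lemma sum_dyadic_sorted (K : R) cs : 0 <= K ->
  sorted >%R (map dyadic_floor cs) -> {in cs, forall x, dyadic_floor x <= K} ->
  \sum_(x <- cs) dyadic_floor x <= 2 * K.
Proof.
case: cs => [|c cs] K_ge0 /= gt_cs le_K; first by rewrite big_nil mulr_ge0.
have := sum_dyadic_path gt_cs; have := le_K c (mem_head _ _).
by rewrite big_cons; lra.
Qed.

End DyadicFloor.

Section KeyedLists.
Variables (d : Order.disp_t) (O : orderType d) (T I : eqType).
Variables (k : T -> O) (lab : T -> I).
Local Open Scope order_scope.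
Implicit Types (c x y z : T) (l : seq T).

Fixpoint push c l :=
  if l is y :: l' then
    if k c <= k y then y :: push c l' else c :: push y l'
  else [:: c].

Fixpoint push_moved c l :=
  if l is y :: l' then
    if k c <= k y then push_moved c l' else y :: push_moved y l'
  else [::].

(* [fill l] closes a hole in front of [l] by moving the last item of each
   maximal run of equal keys to the front of that run. *)
Fixpoint fill l :=
  if l is y :: l' then
    if l' is z :: _ then
      if k z == k y then head y (fill l') :: y :: behead (fill l')
      else y :: fill l'
    else [:: y]
  else [::].

Fixpoint fill_moved l :=
  if l is y :: l' then
    if l' is z :: _ then
      if k z == k y then fill_moved l' else y :: fill_moved l'
    else [:: y]
  else [::].

Fixpoint remove (j : I) l :=
  if l is y :: l' then if lab y == j then fill l' else y :: remove j l'
  else [::].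

Fixpoint remove_moved (j : I) l :=
  if l is y :: l' then if lab y == j then fill_moved l' else remove_moved j l'
  else [::].

Lemma gt_trans : transitive (>%O : rel O).
Proof. exact: rev_trans lt_trans. Qed.

Lemma sorted_keyE y l :
  sorted >=%O (map k (y :: l)) = all (fun x => k x <= k y) l && sorted >=%O (map k l).
Proof. by rewrite /= path_sortedE ?all_map //; apply: ge_trans. Qed.

Lemma strict_sorted_keyE y l :
  sorted >%O (map k (y :: l)) = all (fun x => k x < k y) l && sorted >%O (map k l).
Proof. by rewrite /= path_sortedE ?all_map //; apply: gt_trans. Qed.

Lemma perm_push c l : perm_eq (push c l) (c :: l).
Proof.
elim: l c => [|y l IH] c //=; case: ifP => _; last by rewrite perm_cons IH.
by rewrite perm_sym (perm_catCA [:: c] [:: y]) /= perm_cons perm_sym IH.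
Qed.

Lemma sorted_push c l : sorted >=%O (map k l) -> sorted >=%O (map k (push c l)).
Proof.
elim: l c => [|y l IH] c //; rewrite [push _ _]/= sorted_keyE => /andP[le_y sorted_l].
case: ifPn => [le_cy|]; last rewrite -ltNge => lt_yc.
  rewrite sorted_keyE IH // andbT (perm_all _ (perm_push c l)) /= le_cy.
  exact: le_y.
rewrite sorted_keyE IH // andbT (perm_all _ (perm_push y l)) /= (ltW lt_yc).
by apply: sub_all le_y => x /le_trans; apply; apply: ltW.
Qed.

Lemma subseq_push_moved c l : subseq (push_moved c l) l.
Proof.
elim: l c => [|y l IH] c //=; case: ifP => _; last by rewrite eqxx.
exact: subseq_trans (IH c) (subseq_cons l y).
Qed.

Lemma path_push_moved c l :
  sorted >=%O (map k l) -> path >%O (k c) (map k (push_moved c l)).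
Proof.
elim: l c => [|y l IH] c //= /path_sorted sorted_l.
by case: ifPn => [_|]; [apply: IH | rewrite /= -ltNge => ->; apply: IH].
Qed.

Lemma index_push c l j : j \in map lab l -> j != lab c ->
  j \notin map lab (push_moved c l) ->
  index j (map lab (push c l)) = index j (map lab l).
Proof.
elim: l c => [|y l IH] c //=; rewrite inE => j_yl j_c.
case: ifP => _ /=; last rewrite inE negb_or => /andP[j_y j_moved].
  case: eqVneq => // j_y j_moved; congr _.+1.
  by apply: IH => //; rewrite eq_sym (negbTE j_y) in j_yl.
rewrite eq_sym (negbTE j_c) eq_sym (negbTE j_y); congr _.+1.
by apply: IH => //; rewrite (negbTE j_y) in j_yl.
Qed.

Lemma fill_step y z l : fill [:: y, z & l] =
  if k z == k y then head y (fill (z :: l)) :: y :: behead (fill (z :: l))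
  else y :: fill (z :: l).
Proof. by []. Qed.

Lemma fill_moved_step y z l : fill_moved [:: y, z & l] =
  if k z == k y then fill_moved (z :: l) else y :: fill_moved (z :: l).
Proof. by []. Qed.

Lemma fill_cons y l : exists x r ms,
  [/\ fill (y :: l) = x :: r, fill_moved (y :: l) = x :: ms & k x = k y].
Proof.
elim: l y => [|z l IH] y; first by exists y, [::], [::].
rewrite fill_step fill_moved_step; case: eqP => [k_zy|_]; last by do 3!eexists.
by have [x [r [ms [-> -> k_xz]]]] := IH z; exists x, (y :: r), ms; rewrite k_xz.
Qed.

Lemma perm_fill l : perm_eq (fill l) l.
Proof.
elim: l => [|y [|z l] IH] //; rewrite fill_step; case: ifP => _; last first.
  by rewrite perm_cons.
have [x [r [ms [fillE _ _]]]] := fill_cons z l; rewrite fillE /= in IH *.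
by rewrite (perm_catCA [:: x] [:: y]) /= perm_cons.
Qed.

Lemma subseq_fill_moved l : subseq (fill_moved l) l.
Proof.
elim: l => [|y [|z l] IH] //.
rewrite fill_moved_step; case: ifP => _; last by rewrite /= eqxx.
exact: subseq_trans IH (subseq_cons _ y).
Qed.

Lemma sorted_fill l : sorted >=%O (map k l) -> sorted >=%O (map k (fill l)).
Proof.
elim: l => [|y [|z l] IH] //; rewrite sorted_keyE => /andP[le_y sorted_zl].
have le_fill_y : all (fun x => k x <= k y) (fill (z :: l)).
  by rewrite (perm_all _ (perm_fill _)).
rewrite fill_step; case: eqP => [k_zy|_]; last first.
  by rewrite sorted_keyE le_fill_y; apply: IH.
have [x [r [ms [fillE _ k_xz]]]] := fill_cons z l.
rewrite fillE [head _ _]/= [behead _]/= in IH le_fill_y *.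
move: le_fill_y (IH sorted_zl).
rewrite [all _ _]/= sorted_keyE => /andP[_ le_r] /andP[_ sorted_r].
by rewrite !sorted_keyE le_r sorted_r k_xz k_zy /= lexx le_r.
Qed.

Lemma sorted_fill_moved l :
  sorted >=%O (map k l) -> sorted >%O (map k (fill_moved l)).
Proof.
elim: l => [|y [|z l] IH] //; rewrite sorted_keyE => /andP[le_y sorted_zl].
rewrite fill_moved_step; case: eqP => [_|k_zy]; first exact: IH.
rewrite strict_sorted_keyE IH // andbT.
have lt_zy : k z < k y by rewrite lt_neqAle; apply/andP; split; [apply/eqP | case/andP: le_y].
apply/allP => x /(mem_subseq (subseq_fill_moved _)).
rewrite inE => /predU1P[-> //|xl]; apply: le_lt_trans lt_zy.
by move: sorted_zl; rewrite sorted_keyE => /andP[/allP le_z _]; apply: le_z.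
Qed.

Lemma index_fill l j : j \in map lab l -> j \notin map lab (fill_moved l) ->
  index j (map lab (fill l)) = (index j (map lab l)).+1.
Proof.
elim: l => [|y [|z l] IH] //; first by move=> ->.
rewrite fill_step fill_moved_step; case: ifP => _; last first.
  rewrite [map _ (y :: _)]/= !inE negb_or => j_yzl /andP[j_y j_moved].
  by rewrite /= eq_sym (negbTE j_y) IH //; rewrite (negbTE j_y) in j_yzl.
have [x [r [ms [fillE movedE _]]]] := fill_cons z l.
rewrite fillE movedE in IH * => j_yzl j_moved.
have x_j : lab x != j by apply: contraNneq j_moved => <-; rewrite map_f ?mem_head.
rewrite /= (negbTE x_j); case: eqVneq => [//|y_j]; congr _.+2.
rewrite inE eq_sym (negbTE y_j) in j_yzl.
by have := IH j_yzl j_moved; rewrite /= (negbTE x_j) => -[].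
Qed.

Lemma mem_remove j l : {subset remove j l <= l}.
Proof.
elim: l => [|y l IH] //= x; rewrite inE; case: ifP => _.
  by rewrite (perm_mem (perm_fill l)) => ->; rewrite orbT.
by rewrite inE => /predU1P[-> | /IH ->]; rewrite ?eqxx ?orbT.
Qed.

Lemma perm_remove j l :
  uniq (map lab l) -> perm_eq (remove j l) [seq x <- l | lab x != j].
Proof.
elim: l => [|y l IH] //= /andP[y_l uniq_l].
case: eqVneq => [y_j | _] /=; last by rewrite perm_cons IH.
have -> : [seq x <- l | lab x != j] = l.
  apply/all_filterP/allP => x xl; apply: contraNneq y_l => x_j.
  by rewrite y_j -x_j map_f.
exact: perm_fill.
Qed.

Lemma remove_id j l : j \notin map lab l -> remove j l = l.
Proof.
elim: l => [|y l IH] //=; rewrite inE negb_or => /andP[j_y j_l].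
by rewrite eq_sym (negbTE j_y) IH.
Qed.

Lemma sorted_remove j l : sorted >=%O (map k l) -> sorted >=%O (map k (remove j l)).
Proof.
elim: l => [|y l IH] //; rewrite sorted_keyE => /andP[le_y sorted_l] /=.
case: ifP => _; first exact: sorted_fill.
rewrite sorted_keyE IH // andbT; apply/allP => x /mem_remove.
exact: (allP le_y).
Qed.

Lemma subseq_remove_moved j l : subseq (remove_moved j l) l.
Proof.
elim: l => [|y l IH] //=; have sub_l s : subseq s l -> subseq s (y :: l).
  by move/subseq_trans; apply; apply: subseq_cons.
by case: ifP => _; apply: sub_l; [apply: subseq_fill_moved | apply: IH].
Qed.

Lemma sorted_remove_moved j l :
  sorted >=%O (map k l) -> sorted >%O (map k (remove_moved j l)).
Proof.
elim: l => [|y l IH] //; rewrite sorted_keyE => /andP[_ sorted_l] /=.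
by case: ifP => _; [apply: sorted_fill_moved | apply: IH].
Qed.

Lemma remove_moved_key_le j l x : sorted >=%O (map k l) ->
  x \in remove_moved j l -> exists2 y, y \in l & (lab y == j) && (k x <= k y).
Proof.
elim: l => [|y l IH] //; rewrite sorted_keyE => /andP[le_y sorted_l] /=.
case: ifP => [y_j x_moved | _ /(IH sorted_l)[z zl zP]]; last first.
  by exists z; rewrite // inE zl orbT.
exists y; rewrite ?mem_head // y_j.
exact: (allP le_y) _ (mem_subseq (subseq_fill_moved l) x_moved).
Qed.

Lemma index_remove j l i : i != j -> i \in map lab l ->
  i \notin map lab (remove_moved j l) ->
  index i (map lab (remove j l)) = index i (map lab l).
Proof.
elim: l => [|y l IH] //= i_j; rewrite inE.
case: ifP => [/eqP y_j | _] i_yl i_moved.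
  have y_i : (lab y == i) = false by rewrite y_j eq_sym (negbTE i_j).
  by rewrite y_i index_fill //; rewrite eq_sym y_i in i_yl.
rewrite /=; case: eqVneq => // y_i; congr _.+1.
by apply: IH; rewrite // eq_sym (negbTE y_i) in i_yl.
Qed.

End KeyedLists.

Section Sums.
Variable R : realType.

Lemma sum_by_class (T : Type) (r : seq T) (c : T -> nat) K (F : T -> R) :
  \sum_(0 <= i < K) \sum_(x <- r | c x == i) F x = \sum_(x <- r | (c x < K)%N) F x.
Proof.
under eq_bigr do rewrite big_mkcond.
rewrite exchange_big [RHS]big_mkcond; apply: eq_bigr => x _.
rewrite -big_mkcond; under eq_bigl do rewrite eq_sym.
by rewrite big_nat1_eq.
Qed.

Lemma sum_const_cond (T : Type) (r : seq T) (P : pred T) (x : R) :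
  \sum_(y <- r | P y) x = x *+ count P r.
Proof. by rewrite big_const_seq iter_addr_0. Qed.

Lemma ler_sum_pred (T : eqType) (r : seq T) (P Q : pred T) (F : T -> R) :
  {in r, forall x, P x -> Q x} -> {in r, forall x, 0 <= F x} ->
  \sum_(x <- r | P x) F x <= \sum_(x <- r | Q x) F x.
Proof.
move=> PQ F_ge0; rewrite [X in X <= _]big_mkcond [X in _ <= X]big_mkcond.
rewrite big_seq [X in _ <= X]big_seq; apply: ler_sum => x xr.
by case: ifP => [/(PQ x xr) -> // | _]; case: ifP => // _; apply: F_ge0.
Qed.

End Sums.

Lemma size_index_block (T : eqType) (L r : seq T) m q : (0 < m)%N ->
  uniq r -> {subset r <= L} -> {in r, forall x, index x L %/ m = q}%N ->
  (size r <= m)%N.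
Proof.
move=> m_gt0 uniq_r r_L r_q; rewrite -(size_map (index^~ L)) -(size_iota (q * m) m).
apply: uniq_leq_size.
  by rewrite map_inj_in_uniq // => x y /r_L xL /r_L yL; apply: index_inj.
move=> _ /mapP[x xr ->]; rewrite mem_iota -(r_q x xr).
by have := leq_divM (index x L) m; have := ltn_ceil (index x L) m_gt0; lia.
Qed.

Section Updates.
Variable R : realType.
Implicit Types (s : seq (update R)) (t j : nat).

Lemma upd_take s t j : (j < t)%N -> upd (take t s) j = upd s j.
Proof. by move=> jt; rewrite /upd nth_take. Qed.

Lemma item_size_take s t j : (j < t)%N -> item_size (take t s) j = item_size s j.
Proof. by move=> jt; rewrite /item_size upd_take. Qed.

Lemma mem_active s t j : (j \in active s t) =
  [&& (j < t)%N, is_ins (upd s j) & ~~ has (is_del_of j) (take t s)].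
Proof. by rewrite /active mem_filter mem_iota leq0n add0n andbC. Qed.

Lemma active_uniq s t : uniq (active s t).
Proof. exact/filter_uniq/iota_uniq. Qed.

Lemma active_lt s t j : j \in active s t -> (j < t)%N.
Proof. by rewrite mem_active => /and3P[]. Qed.

Lemma size_active_le s t : (t <= size s)%N -> (size (active s t) <= max_items s)%N.
Proof.
move=> ts; rewrite /max_items -ltnS in ts.
exact: (@leq_bigmax _ (fun i : 'I_(size s).+1 => size (active s i)) (Ordinal ts)).
Qed.

Lemma mem_active_del s t i j : (t < size s)%N -> upd s t = Del i ->
  (j \in active s t.+1) = (j \in active s t) && (j != i).
Proof.
move=> ts st; rewrite !mem_active (take_nth (Del 0)) // has_rcons -/(upd s t) st /=.
rewrite ltnS leq_eqVlt; case: eqVneq => [->|_]; first by rewrite ltnn st.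
by rewrite negb_or (eq_sym i); case: (j == i); rewrite ?andbF ?andbT.
Qed.

Section Valid.
Variable s : seq (update R).
Hypothesis valid_s : valid_seq s.

Lemma no_del_of_future t j : (t <= size s)%N -> (t <= j)%N ->
  ~~ has (is_del_of j) (take t s).
Proof.
elim: t => [|t IH] ts tj; first by rewrite take0.
rewrite (take_nth (Del 0)) // has_rcons negb_or IH ?(ltnW ts) ?(ltnW tj) // andbT.
have := valid_s ts; rewrite /upd; case: nth => // i /active_lt it.
by apply/eqP => ij; move: it tj; rewrite ij; lia.
Qed.

Lemma mem_active_ins t a c j : (t < size s)%N -> upd s t = Ins a c ->
  (j \in active s t.+1) = (j \in active s t) || (j == t).
Proof.
move=> ts st; rewrite !mem_active (take_nth (Del 0)) // has_rcons -/(upd s t) st /=.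
rewrite ltnS leq_eqVlt; case: eqVneq => [->|_]; last by rewrite orbF.
by rewrite ltnn st no_del_of_future // ltnW.
Qed.

Lemma active_bounds t j : (t <= size s)%N -> j \in active s t ->
  0 <= item_size s j <= 1 /\ 0 <= item_cost s j.
Proof.
move=> ts /[dup] /active_lt jt; rewrite mem_active => /and3P[_ + _].
by have := valid_s (leq_trans jt ts); rewrite /item_size /item_cost; case: upd.
Qed.

End Valid.
End Updates.

Section Algorithm.
Variable R : realType.
Implicit Types (s : seq (update R)) (n t j : nat).

Definition nclasses n : nat := (trunc_log 2 n).+2.

Definition size_class n (a : R) : nat :=
  find (fun i => 2 ^- i.+1 < a) (iota 0 (trunc_log 2 n).+1).

Definition entry_key (e : nat * R) : R := dyadic_floor e.2.

Definition classes := nat -> seq (nat * R).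

Definition step n (S : classes) t (u : update R) : classes :=
  match u with
  | Ins a c => fun i =>
      if i == size_class n a then push entry_key (t, c) (S i) else S i
  | Del j => fun i => remove entry_key fst j (S i)
  end.

Fixpoint state n s t : classes :=
  if t is t'.+1 then step n (state n s t') t' (upd s t') else fun=> [::].

Definition bin_of n (S : classes) (i j : nat) : nat :=
  (index j (map fst (S i)) %/ 2 ^ i * nclasses n + i)%N.

Definition packing_at n s t : packing :=
  fun j => bin_of n (state n s t) (size_class n (item_size s j)) j.

Definition alg : algorithm R := fun n p => packing_at n p (size p).

Lemma size_class_lt n a : (size_class n a < nclasses n)%N.
Proof. by rewrite /nclasses ltnS -[X in (_ <= X)%N](size_iota 0) find_size. Qed.

Lemma size_class_le n a : a <= 1 -> a <= 2 ^- size_class n a.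
Proof.
move=> a_le1; case def_i: (size_class n a) => [|i]; first by rewrite expr0 invr1.
have lt_i : (i < size_class n a)%N by rewrite def_i.
have i_lt : (i < (trunc_log 2 n).+1)%N.
  by have := size_class_lt n a; rewrite def_i /nclasses; lia.
by have := before_find 0%N lt_i; rewrite nth_iota // add0n => /negbT; rewrite -leNgt.
Qed.

Lemma size_class_gt n a : (size_class n a <= trunc_log 2 n)%N ->
  2 ^- (size_class n a).+1 < a.
Proof.
move=> le_L; have has_i : has (fun i => 2 ^- i.+1 < a) (iota 0 (trunc_log 2 n).+1).
  by rewrite has_find size_iota.
by have := nth_find 0%N has_i; rewrite nth_iota ?add0n.
Qed.

Lemma state_take n s t t' : (t' <= t)%N -> state n (take t s) t' = state n s t'.
Proof. by elim: t' => //= t' IH lt_t't; rewrite IH ?upd_take // ltnW. Qed.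

Lemma alg_take n s t j : (t <= size s)%N -> (j < t)%N ->
  alg n (take t s) j = packing_at n s t j.
Proof.
by move=> ts jt; rewrite /alg /packing_at size_takel // state_take ?item_size_take.
Qed.

End Algorithm.
Arguments entry_key {R}.

Section Invariant.
Variables (R : realType) (n : nat) (s : seq (update R)).
Hypothesis valid_s : valid_seq s.

Definition state_inv t := forall i,
  [/\ uniq (map fst (state n s t i)),
      sorted >=%R (map entry_key (state n s t i)),
      {in state n s t i, forall e, e.2 = item_cost s e.1} &
      map fst (state n s t i) =i
        [pred j | (j \in active s t) && (size_class n (item_size s j) == i)]].

Lemma stateP t : (t <= size s)%N -> state_inv t.
Proof.
elim: t => [|t IH] ts i; first by split=> // j; rewrite mem_active.
have [uniq_S sorted_S cost_S mem_S] := IH (ltnW ts) i.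
rewrite [state _ _ _.+1]/=; case st: (upd s t) => [a c|j0] /=.
  have mem_act j := mem_active_ins valid_s j ts st.
  have size_t : item_size s t = a by rewrite /item_size st.
  have t_notin : t \notin active s t by apply/negP => /active_lt; rewrite ltnn.
  case: eqVneq => [def_i|ne_i]; last first.
    split=> // j; rewrite inE mem_act mem_S inE andb_orl.
    case: (eqVneq j t) => [->|_]; last by rewrite orbF.
    by rewrite (negbTE t_notin) size_t eq_sym (negbTE ne_i).
  have perm_S := perm_map fst (perm_push entry_key (t, c) (state n s t i)).
  split.
  - by rewrite (perm_uniq perm_S) /= uniq_S andbT mem_S inE (negbTE t_notin).
  - exact: sorted_push.
  - move=> e; rewrite (perm_mem (perm_push _ _ _)) inE => /predU1P[-> | /cost_S //].
    by rewrite /item_cost st.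
  - move=> j; rewrite (perm_mem perm_S) !inE mem_act mem_S inE andb_orl.
    case: (eqVneq j t) => [->|_]; last by rewrite orbF.
    by rewrite size_t -def_i eqxx orbT.
have perm_S : perm_eq (map fst (remove entry_key fst j0 (state n s t i)))
                     [seq j <- map fst (state n s t i) | j != j0].
  by rewrite filter_map; apply/perm_map/perm_remove.
split.
- by rewrite (perm_uniq perm_S) filter_uniq.
- exact: sorted_remove.
- by move=> e /mem_remove /cost_S.
- move=> j; rewrite (perm_mem perm_S) mem_filter mem_S.
  by rewrite !inE (mem_active_del j ts st) andbAC andbC.
Qed.

End Invariant.

Lemma fits_total_size (R : realType) (sz : nat -> R) (A : seq nat) (k : nat) :
  fits sz A k -> \sum_(j <- A) sz j <= k%:R.
Proof.
case=> P [feasP P_lt].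
have -> : \sum_(j <- A) sz j = \sum_(j <- A | (P j < k)%N) sz j.
  rewrite big_seq_cond [RHS]big_seq_cond; apply: eq_bigl => j.
  by rewrite andbT; case: (boolP (j \in A)) => // /P_lt ->.
rewrite -sum_by_class (le_trans (ler_sum _ (fun b _ => feasP b))) //.
by rewrite sumr_const_nat subn0.
Qed.

Lemma trunc_log2_le_log2 (R : realType) n : (trunc_log 2 n)%:R <= log2 (n%:R : R).
Proof.
case: n => [|n]; first by rewrite trunc_log0 /log2 ln0 // mul0r.
rewrite /log2 ler_pdivlMr ?ln2_gt0 // mulr_natl -lnXn ?ltr0n //.
rewrite ler_ln ?posrE ?exprn_gt0 ?ltr0n // -natrX ler_nat.
exact: trunc_logP.
Qed.

Lemma natr_div_pow2_le (R : realType) N i : ((N %/ 2 ^ i)%N%:R : R) <= N%:R * 2 ^- i.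
Proof.
rewrite ler_pdivlMr ?exprn_gt0 // -natrX -natrM ler_nat.
exact: leq_divM.
Qed.

Lemma sum_blocks (N : nat -> nat) L : (N L.+1 < 2 ^ L.+1)%N ->
  (\sum_(0 <= i < L.+2) (N i %/ 2 ^ i + (i != 0)) =
   \sum_(0 <= i < L.+1) N i %/ 2 ^ i + L.+1)%N.
Proof.
move=> tiny; rewrite big_split /= big_nat_recr //= divn_small // addn0; congr (_ + _).
by rewrite big_nat_recl //= sum_nat_const_nat subn0 muln1.
Qed.

Section Bounds.
Variables (R : realType) (n : nat) (s : seq (update R)).
Hypothesis valid_s : valid_seq s.
Variables (t : nat) (ts : (t <= size s)%N).

Local Notation N i := (size (state n s t i)).
Local Notation class j := (size_class n (item_size s j)).

Lemma bin_ofK (S : classes R) i j : (i < nclasses n)%N ->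
  (bin_of n S i j %% nclasses n = i /\
   bin_of n S i j %/ nclasses n = index j (map fst (S i)) %/ 2 ^ i)%N.
Proof.
move=> lt_i; rewrite /bin_of modnMDl (modn_small lt_i) divnMDl //.
by rewrite (divn_small lt_i) addn0.
Qed.

Lemma packing_at_feasible : feasible (item_size s) (active s t) (packing_at n s t).
Proof.
move=> b; set i := (b %% nclasses n)%N; set q := (b %/ nclasses n)%N.
have [uniq_S _ _ mem_S] := stateP n valid_s ts i.
set J := [seq j <- active s t | packing_at n s t j == b].
have J_act j : j \in J -> j \in active s t by rewrite mem_filter => /andP[].
have J_bin j : j \in J -> class j = i /\ (index j (map fst (state n s t i)) %/ 2 ^ i)%N = q.
  rewrite mem_filter /i /q => /andP[/eqP <- _].
  by have [-> ->] := bin_ofK (state n s t) j (size_class_lt n (item_size s j)).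
have size_J : (size J <= 2 ^ i)%N.
  apply: (size_index_block (L := map fst (state n s t i)) (q := q)).
  - by rewrite expn_gt0.
  - exact/filter_uniq/active_uniq.
  - by move=> j jJ; have [cj _] := J_bin j jJ; rewrite mem_S inE J_act // cj eqxx.
  - by move=> j /J_bin[].
rewrite -big_filter -/J (@le_trans _ _ (\sum_(j <- J) 2 ^- i)) //.
  rewrite big_seq [X in _ <= X]big_seq; apply: ler_sum => j jJ.
  have [/andP[_ size_le1] _] := active_bounds valid_s ts (J_act j jJ).
  by have [<- _] := J_bin j jJ; apply: size_class_le.
rewrite big_const_seq iter_addr_0 count_predT.
have inv_gt0 : 0 < (2 : R) ^- i by rewrite invr_gt0 exprn_gt0.
rewrite (le_trans (ler_wpMn2l (ltW inv_gt0) size_J)) //.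
by rewrite -(mulr_natr (2 ^- i)) natrX mulVf // expf_neq0 // pnatr_eq0.
Qed.

Lemma bins_used_le_blocks : (bins_used (active s t) (packing_at n s t) <=
  \sum_(0 <= i < nclasses n) (N i %/ 2 ^ i + (i != 0)))%N.
Proof.
pose blocks i := [seq (q * nclasses n + i)%N | q <- iota 0 (N i %/ 2 ^ i + (i != 0))].
apply: (@leq_trans (size (flatten [seq blocks i | i <- index_iota 0 (nclasses n)])));
  last first.
  rewrite size_flatten sumnE /shape -map_comp big_map.
  by apply: leq_sum => i _; rewrite /= size_map size_iota.
apply: uniq_leq_size; first exact: undup_uniq.
move=> b; rewrite mem_undup => /mapP[j ja ->].
apply/flatten_mapP; exists (class j).
  by rewrite mem_index_iota leq0n size_class_lt.
apply: map_f; rewrite mem_iota leq0n add0n /=.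
have [_ _ _ mem_S] := stateP n valid_s ts (class j).
have : (index j (map fst (state n s t (class j))) < N (class j))%N.
  by rewrite -(size_map fst) index_mem mem_S inE ja eqxx.
case: (class j) => [|i] lt_N; first by rewrite expn0 !divn1 addn0.
by rewrite addn1 ltnS leq_div2r // ltnW.
Qed.

Lemma size_state i : N i = count (fun j => class j == i) (active s t).
Proof.
have [uniq_S _ _ mem_S] := stateP n valid_s ts i.
rewrite -size_filter -(size_map fst); apply/perm_size/uniq_perm => //.
  exact/filter_uniq/active_uniq.
by move=> j; rewrite mem_S mem_filter inE andbC.
Qed.

Lemma class_mass_le : \sum_(0 <= i < (trunc_log 2 n).+1) (N i)%:R * 2 ^- i <=
  2 * \sum_(j <- active s t) item_size s j.
Proof.
under eq_bigr => i _ do rewrite size_state mulr_natl -sum_const_cond.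
rewrite (eq_bigr (fun i => \sum_(j <- active s t | class j == i) 2 ^- class j)); last first.
  by move=> i _; apply: eq_bigr => j /eqP ->.
rewrite sum_by_class mulr_sumr; apply: (@le_trans _ _
  (\sum_(j <- active s t | (class j < (trunc_log 2 n).+1)%N) 2 * item_size s j)).
  rewrite big_seq_cond [X in _ <= X]big_seq_cond; apply: ler_sum => j /andP[_ le_L].
  by have := size_class_gt le_L; rewrite exprS invfM; lra.
apply: ler_sum_pred => // j ja.
by have [/andP[size_ge0 _] _] := active_bounds valid_s ts ja; lra.
Qed.

Lemma packing_at_bins_bound opt : (max_items s <= n)%N ->
  is_OPT (item_size s) (active s t) opt ->
  (bins_used (active s t) (packing_at n s t))%:R <= 2 * opt%:R + (1 + log2 (n%:R : R)).
Proof.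
move=> le_n [[P fitsP] _]; set L := trunc_log 2 n.
have tiny : (N L.+1 < 2 ^ L.+1)%N.
  rewrite size_state (leq_ltn_trans (count_size _ _)) //.
  rewrite (leq_ltn_trans (size_active_le ts)) //.
  exact: leq_ltn_trans le_n (trunc_log_ltn _ _).
have bins := bins_used_le_blocks; rewrite sum_blocks // in bins.
have blocks_le : ((\sum_(0 <= i < L.+1) N i %/ 2 ^ i)%N%:R : R) <=
    \sum_(0 <= i < L.+1) (N i)%:R * 2 ^- i.
  by rewrite natr_sum; apply: ler_sum => i _; apply: natr_div_pow2_le.
have := class_mass_le; have := fits_total_size (ex_intro _ P fitsP).
have := trunc_log2_le_log2 R n; rewrite -/L.
move: bins; rewrite -(ler_nat R) natrD => bins; lra.
Qed.

End Bounds.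

Section Recourse.
Variables (R : realType) (n : nat) (s : seq (update R)).
Hypothesis valid_s : valid_seq s.
Variables (t : nat) (ts : (t < size s)%N).

Local Notation class j := (size_class n (item_size s j)).
Local Notation changes_within M := {in active s t, forall j,
  (j \in active s t.+1) && (packing_at n s t j != packing_at n s t.+1 j) ->
  j \in map fst M}.

Lemma moved_cost_le i (M : seq (nat * R)) : subseq M (state n s t i) ->
  \sum_(j <- active s t | j \in map fst M) item_cost s j <= 2 * \sum_(e <- M) entry_key e.
Proof.
move=> sub_M; have [uniq_S _ cost_S mem_S] := stateP n valid_s (ltnW ts) i.
have M_S e : e \in M -> e \in state n s t i by apply: mem_subseq.
have M_act j : j \in map fst M -> j \in active s t.
  by move/(mem_subseq (map_subseq fst sub_M)); rewrite mem_S => /andP[].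
rewrite -big_filter (perm_big (map fst M)) /=; last first.
  apply: uniq_perm; first exact/filter_uniq/active_uniq.
    exact: subseq_uniq (map_subseq fst sub_M) uniq_S.
  by move=> j; rewrite mem_filter andb_idr //; apply: M_act.
rewrite big_map mulr_sumr big_seq [X in _ <= X]big_seq; apply: ler_sum => e eM.
have e_act : e.1 \in active s t by apply: M_act; apply: map_f.
have [_ cost_ge0] := active_bounds valid_s (ltnW ts) e_act.
by rewrite /entry_key cost_S ?M_S //; apply: dyadic_floor_ge_half.
Qed.

Lemma move_cost_le_moved i M : subseq M (state n s t i) -> changes_within M ->
  move_cost s t (packing_at n s t) (packing_at n s t.+1) <= 2 * \sum_(e <- M) entry_key e.
Proof.
move=> sub_M changes; apply: le_trans (moved_cost_le sub_M).
apply: ler_sum_pred => // j ja.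
by have [] := active_bounds valid_s (ltnW ts) ja.
Qed.

Lemma ins_changes_within a c : upd s t = Ins a c ->
  changes_within (push_moved entry_key (t, c) (state n s t (size_class n a))).
Proof.
move=> st j ja /andP[_]; apply: contraNT => j_notin; apply/eqP.
rewrite /packing_at /bin_of /= st /=; case: eqVneq => [class_j|_] //.
have [_ _ _ mem_S] := stateP n valid_s (ltnW ts) (class j).
rewrite index_push //.
- by rewrite mem_S inE ja eqxx.
- by apply: contraTneq ja => /= ->; apply/negP => /active_lt; rewrite ltnn.
- by rewrite class_j.
Qed.

Lemma del_changes_within j0 : upd s t = Del j0 ->
  changes_within (remove_moved entry_key fst j0 (state n s t (class j0))).
Proof.
move=> st j ja /andP[ja']; apply: contraNT => j_notin; apply/eqP.
rewrite /packing_at /bin_of /= st /=.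
have [_ _ _ mem_S] := stateP n valid_s (ltnW ts) (class j).
have j_j0 : j != j0 by move: ja'; rewrite (mem_active_del j ts st) => /andP[].
case: (eqVneq (class j) (class j0)) => [class_j|class_j].
  by rewrite index_remove // ?mem_S ?inE ?ja ?eqxx // class_j.
by rewrite remove_id // mem_S inE eq_sym (negbTE class_j) andbF.
Qed.

Lemma packing_at_recourse :
  move_cost s t (packing_at n s t) (packing_at n s t.+1) <= 4 * update_cost s t.
Proof.
rewrite /update_cost -/(upd s t); case st: (upd s t) => [a c|j0].
  have [_ sorted_S _ _] := stateP n valid_s (ltnW ts) (size_class n a).
  set L := state n s t (size_class n a).
  apply: le_trans (move_cost_le_moved (subseq_push_moved _ _ L) (ins_changes_within st)) _.
  set M := push_moved _ _ _.
  have : path >%R (dyadic_floor c) [seq dyadic_floor x | x <- map snd M].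
    by rewrite -map_comp; apply: path_push_moved.
  move/sum_dyadic_path; rewrite big_map => keys_le.
  have [_ c_ge0] : 0 <= a <= 1 /\ 0 <= c by have := valid_s ts; rewrite st.
  by have := dyadic_floor_le c_ge0; rewrite /entry_key; lra.
have j0a : j0 \in active s t by have := valid_s ts; rewrite st.
have [_ sorted_S cost_S _] := stateP n valid_s (ltnW ts) (class j0).
set L := state n s t (class j0).
apply: le_trans (move_cost_le_moved (subseq_remove_moved _ _ _ L) (del_changes_within st)) _.
set M := remove_moved _ _ _ _.
have M_le : {in map snd M, forall x, dyadic_floor x <= dyadic_floor (item_cost s j0)}.
  move=> _ /mapP[e eM ->]; have [y yL /andP[/eqP <- le_ey]] := remove_moved_key_le sorted_S eM.
  by rewrite -cost_S.
have : sorted >%R [seq dyadic_floor x | x <- map snd M].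
  by rewrite -map_comp; apply: sorted_remove_moved.
move/(sum_dyadic_sorted (dyadic_floor_ge0 _))/(_ M_le); rewrite big_map => keys_le.
have [_ cost_ge0] := active_bounds valid_s (ltnW ts) j0a.
by have := dyadic_floor_le cost_ge0; rewrite /entry_key; lra.
Qed.

End Recourse.

Lemma eq_in_feasible (R : realType) (sz : nat -> R) (A : seq nat) (P Q : packing) :
  {in A, P =1 Q} -> feasible sz A P -> feasible sz A Q.
Proof.
move=> PQ feasP b; rewrite big_seq_cond (eq_bigl (fun j => (j \in A) && (P j == b))).
  by rewrite -big_seq_cond.
by move=> j; case: (boolP (j \in A)) => //= /PQ ->.
Qed.

Section Transfer.
Variables (R : realType) (n : nat) (s : seq (update R)) (t : nat).

Lemma alg_take_active : (t <= size s)%N ->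
  {in active s t, packing_at n s t =1 alg n (take t s)}.
Proof. by move=> ts j /active_lt jt; rewrite alg_take. Qed.

Lemma alg_feasible : valid_seq s -> (t <= size s)%N ->
  feasible (item_size s) (active s t) (alg n (take t s)).
Proof.
move=> valid_s ts; apply: eq_in_feasible (packing_at_feasible n valid_s ts).
exact: alg_take_active.
Qed.

Lemma alg_bins_used : (t <= size s)%N ->
  bins_used (active s t) (alg n (take t s)) = bins_used (active s t) (packing_at n s t).
Proof. by move=> ts; congr (size (undup _)); apply/esym/eq_in_map/alg_take_active. Qed.

Lemma alg_move_cost : (t < size s)%N ->
  move_cost s t (alg n (take t s)) (alg n (take t.+1 s)) =
  move_cost s t (packing_at n s t) (packing_at n s t.+1).
Proof.
move=> ts; rewrite /move_cost big_seq_cond [RHS]big_seq_cond; apply: eq_bigl => j.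
case: (boolP (j \in active s t)) => //= ja.
by rewrite -(alg_take_active (ltnW ts) ja) alg_take //; apply/leqW/(active_lt ja).
Qed.

End Transfer.

Theorem factC1 (R : realType) :
  exists (gamma : R) (A : algorithm R),
  forall (n : nat) (s : seq (update R)),
    valid_seq s -> max_items s = n ->
    (forall t, (t <= size s)%N ->
       feasible (item_size s) (active s t) (A n (take t s)) /\
       forall opt, is_OPT (item_size s) (active s t) opt ->
         (bins_used (active s t) (A n (take t s)))%:R
           <= 2 * opt%:R + (1 + log2 (n%:R : R))) /\
    (forall t, (t < size s)%N ->
       move_cost s t (A n (take t s)) (A n (take t.+1 s))
         <= gamma * update_cost s t).
Proof.
exists 4, (@alg R) => n s valid_s max_n; split=> t ts.
  split=> [|opt OPT]; first exact: alg_feasible.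
  by rewrite alg_bins_used //; apply: packing_at_bins_bound; rewrite ?max_n.
by rewrite alg_move_cost //; apply: packing_at_recourse.
Qed.
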